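(* Let $\mathcal{A}$ be a finite set of players and $\mathcal{R}$ a finite set of resources; each player $i$ has a finite strategy set $\Gamma_i$, each $\gamma_i\in\Gamma_i$ determining a set $\gamma_i^{\mathrm{cg}}\subseteq\mathcal{R}$. For $\gamma\in\Gamma=\prod_i\Gamma_i$ let $l_r(\gamma)=\sum_i\mathbf{1}[r\in\gamma_i^{\mathrm{cg}}]$, and let each $J_r$ be a polynomial with non-negative coefficients of degree at most $d$. Player costs are $J_i(\gamma)=\sum_{r\in\gamma_i^{\mathrm{cg}}}J_r(l_r(\gamma))+J_i^{\mathrm{per}}(\gamma_i)$ with $J_i^{\mathrm{per}}\ge0$ depending only on $\gamma_i$. Let $C=\sum_iJ_i$, $\Gamma_{\mathrm{NE}}$ the set of pure Nash equilibria, $\Gamma^\star=\arg\min_\Gamma C$, $\mathrm{PoA}=\max_{\Gamma_{\mathrm{NE}}}C/\min_\Gamma C$, and $\alpha^\star\ge0$ the largest constant with $J_i^{\mathrm{per}}(\gamma_i)\ge\alpha^\star\sum_{r\in\gamma_i^{\mathrm{cg}}}J_r(l_r(\gamma))$ for all $i$ and all $\gamma\in\Gamma_{\mathrm{NE}}\cup\Gamma^\star$. Let $\mathcal{P}_d$ denote the set of polynomials of degree at most $d$ with non-negative coefficients. Then $\mathrm{PoA}$ is at most $$\min_{\tilde\lambda\in\mathbb{R},\ \tilde\mu\in(0,1+\alpha^\star)}\ \frac{\tilde\lambda+\alpha^\star}{1-\tilde\mu+\alpha^\star}\quad\text{s.t.}\quad y\,J(x+1)\le\tilde\lambda\,y\,J(y)+\tilde\mu\,x\,J(x)\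 \ \forall x,y\in\mathbb{N}_0,\ J\in\mathcal{P}_d.$$
   Context: This is the congestion-game model of urban driving games (resources are space-time-proximity grid cells). A pure Nash equilibrium is a $\gamma$ with $J_i(\gamma)\le J_i(\gamma_i',\gamma_{-i})$ for all $i$ and $\gamma_i'\in\Gamma_i$. *)

From HB Require Import structures.
From mathcomp Require Import all_boot all_order all_algebra.
Set Implicit Arguments. Unset Strict Implicit. Unset Printing Implicit Defensive.
Import Order.TTheory GRing.Theory Num.Theory.
Local Open Scope ring_scope.

(* Congestion game data:
   A   : finite set of players
   Rs  : finite set of resources
   S   : a finite ambient type of strategies; Gam i : {set S} is Gamma_i
   cg i s : {set Rs}  is gamma_i^cg for the strategy s of player i
   Jr r : {poly R}    is the resource cost J_r
   Jper i s           is J_i^per(gamma_i) *)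

Definition feasible (A S : finType) (Gam : A -> {set S}) (g : {ffun A -> S}) :=
  forall i, g i \in Gam i.

Definition load (A S Rs : finType) (cg : A -> S -> {set Rs})
  (g : {ffun A -> S}) (r : Rs) : nat :=
  #|[set i | r \in cg i (g i)]|.

Definition cong_cost (R : realFieldType) (A S Rs : finType)
  (cg : A -> S -> {set Rs}) (Jr : Rs -> {poly R})
  (i : A) (g : {ffun A -> S}) : R :=
  \sum_(r in cg i (g i)) (Jr r).[(load cg g r)%:R].

Definition pcost (R : realFieldType) (A S Rs : finType)
  (cg : A -> S -> {set Rs}) (Jr : Rs -> {poly R}) (Jper : A -> S -> R)
  (i : A) (g : {ffun A -> S}) : R :=
  cong_cost cg Jr i g + Jper i (g i).

Definition scost (R : realFieldType) (A S Rs : finType)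
  (cg : A -> S -> {set Rs}) (Jr : Rs -> {poly R}) (Jper : A -> S -> R)
  (g : {ffun A -> S}) : R :=
  \sum_i pcost cg Jr Jper i g.

Definition deviate (A S : finType) (g : {ffun A -> S}) (i : A) (s : S)
  : {ffun A -> S} :=
  [ffun j => if j == i then s else g j].

Definition is_NE (R : realFieldType) (A S Rs : finType) (Gam : A -> {set S})
  (cg : A -> S -> {set Rs}) (Jr : Rs -> {poly R}) (Jper : A -> S -> R)
  (g : {ffun A -> S}) : Prop :=
  feasible Gam g /\
  forall i s, s \in Gam i ->
    pcost cg Jr Jper i g <= pcost cg Jr Jper i (deviate g i s).

Definition is_opt (R : realFieldType) (A S Rs : finType) (Gam : A -> {set S})
  (cg : A -> S -> {set Rs}) (Jr : Rs -> {poly R}) (Jper : A -> S -> R)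
  (g : {ffun A -> S}) : Prop :=
  feasible Gam g /\
  forall g', feasible Gam g' -> scost cg Jr Jper g <= scost cg Jr Jper g'.

Definition in_Pd (R : realFieldType) (d : nat) (p : {poly R}) : Prop :=
  (size p <= d.+1)%N /\ forall k, 0 <= p`_k.

Definition alpha_valid (R : realFieldType) (A S Rs : finType) (Gam : A -> {set S})
  (cg : A -> S -> {set Rs}) (Jr : Rs -> {poly R}) (Jper : A -> S -> R)
  (a : R) : Prop :=
  0 <= a /\
  forall g, is_NE Gam cg Jr Jper g \/ is_opt Gam cg Jr Jper g ->
    forall i, a * cong_cost cg Jr i g <= Jper i (g i).

Definition lm_feasible (R : realFieldType) (d : nat) (a lam mu : R) : Prop :=
  0 < mu < 1 + a /\
  forall (x y : nat) (p : {poly R}), in_Pd d p ->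
    y%:R * p.[(x.+1)%:R] <= lam * (y%:R * p.[y%:R]) + mu * (x%:R * p.[x%:R]).

(* A Nash equilibrium g does no better by deviating to the optimum o, so
   C(g) <= sum_r l_r(o) J_r(l_r(g) + 1) + per-costs of o; the
   (lambda, mu)-smoothness inequality bounds the sum by
   lambda K(o) + mu K(g), where K is the total congestion cost. Since the
   per-costs of g and o dominate alpha^star times their congestion costs, a
   nonnegative combination of these three inequalities rearranges to
   (1 - mu + alpha^star) C(g) <= (lambda + alpha^star) C(o). *)
From HB Require Import structures.
From mathcomp Require Import all_boot all_order all_algebra.
From mathcomp Require Import lra.
Set Implicit Arguments. Unset Strict Implicit. Unset Printing Implicit Defensive.
Import Order.TTheory GRing.Theory Num.Theory.
Local Open Scope ring_scope.

Lemma ler_horner_nneg_coef (R : realFieldType) (p : {poly R}) (x y : R) :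
  (forall k, 0 <= p`_k) -> 0 <= x -> x <= y -> p.[x] <= p.[y].
Proof.
move=> p_ge0 x_ge0 le_xy; rewrite !horner_coef; apply: ler_sum => i _.
apply: ler_wpM2l => //; apply: lerXn2r => //; rewrite nnegrE //.
exact: le_trans le_xy.
Qed.

Lemma load_deviate (A S Rs : finType) (cg : A -> S -> {set Rs})
  (g : {ffun A -> S}) (i : A) (s : S) (r : Rs) :
  (load cg (deviate g i s) r <= (load cg g r).+1)%N.
Proof.
have sub_users : [set j | r \in cg j (deviate g i s j)]
    \subset i |: [set j | r \in cg j (g j)].
  by apply/subsetP => j; rewrite !inE ffunE; case: eqP => [->|_] //= ->.
apply: leq_trans (subset_leq_card sub_users) _.
by rewrite cardsU1 -add1n leq_add2r leq_b1.
Qed.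

Lemma lm_feasible_ge1 (R : realFieldType) (d : nat) (a lam mu : R) :
  lm_feasible d a lam mu -> 1 <= lam.
Proof.
case=> _ smooth.
have one_Pd : in_Pd d (1 : {poly R}).
  split; first by rewrite size_polyC; case: (1 != 0).
  by move=> k; rewrite coefC; case: (k == 0%N).
have := smooth 0%N 1%N 1 one_Pd.
by rewrite !hornerC !mul1r !mul0r mulr0 addr0 mulr1.
Qed.

Lemma poa_ratio_bound (R : realFieldType) (a lam mu Kg Pg Ko Po : R) :
  0 < mu < 1 + a -> 1 <= lam -> a * Kg <= Pg -> a * Ko <= Po ->
  Kg + Pg <= lam * Ko + mu * Kg + Po ->
  Kg + Pg <= (lam + a) / (1 - mu + a) * (Ko + Po).
Proof.
move=> /andP[mu_gt0 mu_lt] lam_ge1 alpha_g alpha_o smooth_g.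
rewrite mulrAC ler_pdivlMr; last by lra.
(* The difference of the two sides is exactly the sum of these three terms. *)
have slack_g : 0 <= mu * (Pg - a * Kg) by apply: mulr_ge0; lra.
have slack_o : 0 <= (lam - 1) * (Po - a * Ko) by apply: mulr_ge0; lra.
have slack_NE : 0 <= (1 + a) * (lam * Ko + mu * Kg + Po - Kg - Pg).
  by apply: mulr_ge0; lra.
lra.
Qed.

Section CongestionGame.

Variables (R : realFieldType) (A S Rs : finType).
Variables (cg : A -> S -> {set Rs}) (Jr : Rs -> {poly R}) (Jper : A -> S -> R).

Lemma sum_cg_load (h : {ffun A -> S}) (F : Rs -> R) :
  \sum_i \sum_(r in cg i (h i)) F r = \sum_r (load cg h r)%:R * F r.
Proof.
under eq_bigr do rewrite big_mkcond /=.
rewrite exchange_big /=; apply: eq_bigr => r _.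
rewrite -big_mkcond /= mulr_natl /load -sumr_const.
by apply: eq_bigl => i; rewrite inE.
Qed.

Definition cong_total (h : {ffun A -> S}) : R :=
  \sum_r (load cg h r)%:R * (Jr r).[(load cg h r)%:R].

Definition per_total (h : {ffun A -> S}) : R := \sum_i Jper i (h i).

Lemma scost_cong_per (h : {ffun A -> S}) :
  scost cg Jr Jper h = cong_total h + per_total h.
Proof. by rewrite /scost /pcost big_split /= /cong_cost sum_cg_load. Qed.

Lemma cong_total_alpha (a : R) (h : {ffun A -> S}) :
  (forall i, a * cong_cost cg Jr i h <= Jper i (h i)) ->
  a * cong_total h <= per_total h.
Proof.
move=> alpha_h; rewrite /cong_total -sum_cg_load mulr_sumr.
by apply: ler_sum => i _; apply: alpha_h.
Qed.

Lemma NE_scost_le_deviation (Gam : A -> {set S}) (g o : {ffun A -> S}) :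
  (forall r k, 0 <= (Jr r)`_k) ->
  is_NE Gam cg Jr Jper g -> feasible Gam o ->
  scost cg Jr Jper g <=
    \sum_r (load cg o r)%:R * (Jr r).[(load cg g r).+1%:R] + per_total o.
Proof.
move=> Jr_ge0 [_ NE_g] o_feas.
rewrite -sum_cg_load /per_total -big_split /=; apply: ler_sum => i _.
apply: le_trans (NE_g i (o i) (o_feas i)) _.
rewrite /pcost /cong_cost ffunE eqxx lerD2r; apply: ler_sum => r _.
apply: ler_horner_nneg_coef; [exact: Jr_ge0 | exact: ler0n |].
by rewrite ler_nat load_deviate.
Qed.

Lemma smooth_deviation_sum (d : nat) (a lam mu : R) (g o : {ffun A -> S}) :
  (forall r, in_Pd d (Jr r)) -> lm_feasible d a lam mu ->
  \sum_r (load cg o r)%:R * (Jr r).[(load cg g r).+1%:R]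
    <= lam * cong_total o + mu * cong_total g.
Proof.
move=> Jr_Pd [_ smooth].
rewrite /cong_total !mulr_sumr -big_split /=.
by apply: ler_sum => r _; apply: smooth.
Qed.

End CongestionGame.

Theorem lemma1 (R : realFieldType) (A S Rs : finType) (Gam : A -> {set S})
  (cg : A -> S -> {set Rs}) (d : nat) (Jr : Rs -> {poly R})
  (Jper : A -> S -> R)
  (hJr : forall r, in_Pd d (Jr r))
  (hJper : forall i s, s \in Gam i -> 0 <= Jper i s)
  (astar : R)
  (ha : alpha_valid Gam cg Jr Jper astar)
  (hamax : forall b, alpha_valid Gam cg Jr Jper b -> b <= astar)
  (lam mu : R) (hlm : lm_feasible d astar lam mu)
  (gNE gopt : {ffun A -> S})
  (hNE : is_NE Gam cg Jr Jper gNE) (hopt : is_opt Gam cg Jr Jper gopt) :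
  scost cg Jr Jper gNE <=
    (lam + astar) / (1 - mu + astar) * scost cg Jr Jper gopt.
Proof.
have [_ alpha_bound] := ha.
have deviation := NE_scost_le_deviation (fun r => proj2 (hJr r)) hNE
  (proj1 hopt).
have smooth := smooth_deviation_sum cg gNE gopt hJr hlm.
rewrite !scost_cong_per in deviation *.
apply: poa_ratio_bound.
- by case: hlm.
- exact: lm_feasible_ge1 hlm.
- exact: cong_total_alpha (alpha_bound _ (or_introl hNE)).
- exact: cong_total_alpha (alpha_bound _ (or_intror hopt)).
- by apply: le_trans deviation _; rewrite lerD2r.
Qed.
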